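(* For all integers $m,n\ge1$ and every $c>\frac{m!\,n!}{m^m n^n}$ one has $\operatorname{D}^\times_{m,n}(c\psi_1)=\mathbb R^{m\times n}$.
   Context: For $Y\in\mathbb R^{m\times n}$ let $Y_1,\dots,Y_m$ be its rows. For $\boldsymbol x\in\mathbb R^n$ put $\Pi_+(\boldsymbol x):=\prod_{i=1}^n\max\{1,|x_i|\}$. For $\psi:[1,\infty)\to(0,\infty)$ and $T>1$ let $\mathcal S^\times_{m,n}(\psi,T)$ be the set of $Y\in\mathbb R^{m\times n}$ for which there exist $\boldsymbol p\in\mathbb Z^m$, $\boldsymbol q\in\mathbb Z^n\setminus\{\boldsymbol 0\}$ with $\prod_{i=1}^m|Y_i\boldsymbol q-p_i|<\psi(T)$ and $\Pi_+(\boldsymbol q)<T$. Put $\operatorname{D}^\times_{m,n}(\psi):=\bigcup_{T_0>1}\bigcap_{T\ge T_0}\mathcal S^\times_{m,n}(\psi,T)$, and $\psi_1(x):=1/x$. *)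

From HB Require Import structures.
From mathcomp Require Import all_boot all_order all_algebra.
From mathcomp Require Import reals.
Set Implicit Arguments. Unset Strict Implicit. Unset Printing Implicit Defensive.
Import Order.TTheory GRing.Theory Num.Theory.
Local Open Scope ring_scope.

Definition Pi_plus (R : realType) (n : nat) (q : 'I_n -> int) : R :=
  \prod_(j < n) Num.max 1 (`|q j|%:~R : R).

Definition row_form (R : realType) (m n : nat) (Y : 'M[R]_(m, n))
    (q : 'I_n -> int) (p : 'I_m -> int) (i : 'I_m) : R :=
  \sum_(j < n) Y i j * (q j)%:~R - (p i)%:~R.

Definition S_times (R : realType) (m n : nat) (psi : R -> R) (T : R)
    (Y : 'M[R]_(m, n)) : Prop :=
  exists (p : 'I_m -> int) (q : 'I_n -> int),
    (exists j, q j != 0) /\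
    \prod_(i < m) `|@row_form R m n Y q p i| < psi T /\
    @Pi_plus R n q < T.

Definition D_times (R : realType) (m n : nat) (psi : R -> R)
    (Y : 'M[R]_(m, n)) : Prop :=
  exists T0 : R, 1 < T0 /\ forall T : R, T0 <= T -> @S_times R m n psi T Y.

Definition psi1 (R : realType) (x : R) : R := x^-1.

From HB Require Import structures.
From mathcomp Require Import all_boot all_order all_algebra.
From mathcomp Require Import reals.
From mathcomp Require Import zify ring lra.
From Stdlib Require Import Classical.
Set Implicit Arguments.
Unset Strict Implicit.
Unset Printing Implicit Defensive.
Import Order.TTheory GRing.Theory Num.Theory.

(* A pigeonhole version of Minkowski's theorem.  Let q run over the integer points of the
   l1-ball of radius R in Z^n (there are at least 2^n C(R,n) of them) and u over those of the
   l1-ball of radius r in Z^m.  The vector (floor (M {Y_i q}) + u_i + r)_i lies in a box with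
   (M + 2r)^m points and determines u once q is fixed, so if 2^n C(R,n) 2^m C(r,m) exceeds
   (M + 2r)^m, two pairs (q, u), (q', u') with q <> q' give the same vector.  For q - q' and
   p_i the difference of the integer parts of Y_i q and Y_i q', this gives
   M sum_i |Y_i (q - q') - p_i| < sum_i |u_i - u'_i| + m <= 2r + m and sum_j |q_j - q'_j| <= 2R,
   so by AM-GM the product of the |Y_i (q - q') - p_i| is below ((2r + m) / (mM))^m while
   Pi_+(q - q') <= ((n + 2R) / n)^n.  With R maximal such that ((n + 2R) / n)^n < T, r fixed
   and large, and M maximal for the collision condition, the first bound is
   m! n! / (m^m n^n T) up to three factors 1 + e, which the slack in c absorbs. *)

Local Open Scope nat_scope.

Fixpoint ints_upto (r : nat) : seq int :=
  if r is r'.+1 then Posz r'.+1 :: Negz r' :: ints_upto r' else [:: Posz 0].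

Fixpoint l1_ball (k r : nat) : seq (seq int) :=
  if k is k'.+1 then [seq a :: x | a <- ints_upto r, x <- l1_ball k' (r - absz a)]
  else [:: [::]].

Definition l1_norm (k : nat) (x : seq int) : nat := \sum_(i < k) absz (nth 0%R x i).

Lemma ints_upto_abs r a : a \in ints_upto r -> absz a <= r.
Proof.
elim: r => [|r IHr] /=; first by rewrite inE => /eqP->.
rewrite !inE => /orP[/eqP->//|/orP[/eqP->//|/IHr/leqW//]].
Qed.

Lemma ints_upto_uniq r : uniq (ints_upto r).
Proof.
elim: r => [|r IHr] //=; rewrite IHr andbT !inE negb_or /=.
by apply/andP; split; apply/negP => /ints_upto_abs /=; rewrite ltnn.
Qed.

Lemma sumn_ints_upto (G : nat -> nat) r :
  sumn [seq G (absz a) | a <- ints_upto r] = G 0 + 2 * \sum_(j < r) G j.+1.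
Proof.
elim: r => [|r IHr]; first by rewrite /= big_ord0.
rewrite [ints_upto _]/= !map_cons /= IHr big_ord_recr /=; lia.
Qed.

Lemma sum_bin_sub r k : \sum_(j < r) 'C(r - j.+1, k) = 'C(r, k.+1).
Proof.
elim: r => [|r IHr]; first by rewrite big_ord0 bin0n.
by rewrite big_ord_recl subn1 /= binS addnC -IHr.
Qed.

Lemma l1_ball_size k r : 2 ^ k * 'C(r, k) <= size (l1_ball k r).
Proof.
elim: k r => [|k IHk] r; first by rewrite bin0.
rewrite /= size_allpairs_dep (sumn_ints_upto (fun j => size (l1_ball k (r - j)))).
rewrite subn0 -sum_bin_sub expnS -mulnA !big_distrr /=.
apply: leq_trans (leq_addl _ _); rewrite leq_sum // => j _.
by rewrite leq_mul2l IHk orbT.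
Qed.

Lemma mem_l1_ball k r x : x \in l1_ball k r -> size x = k /\ l1_norm k x <= r.
Proof.
rewrite /l1_norm; elim: k r x => [|k IHk] r x /=.
  by rewrite inE => /eqP->; rewrite big_ord0.
case/allpairsPdep => a [y [ha /IHk[sy hy] ->]]; split; first by rewrite /= sy.
by rewrite big_ord_recl /= -leq_subRL // ints_upto_abs.
Qed.

Lemma l1_ball_uniq k r : uniq (l1_ball k r).
Proof.
elim: k r => [|k IHk] r //=.
apply: allpairs_uniq_dep => [|a _|]; [exact: ints_upto_uniq | exact: IHk |].
by move=> [a x] [b y] _ _ /= [-> ->].
Qed.

Lemma l1_norm_nth k x i : i < k -> absz (nth 0%R x i) <= l1_norm k x.
Proof. by move=> ik; rewrite /l1_norm (bigD1 (Ordinal ik)) //= leq_addr. Qed.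

Lemma sum_absz_sub_le k (x y : seq int) :
  \sum_(i < k) `|(nth 0 x i - nth 0 y i)%R| <= l1_norm k x + l1_norm k y.
Proof.
rewrite /l1_norm -big_split leq_sum // => i _.
by have := leqD_dist (nth 0%R x i) 0%R (nth 0%R y i); rewrite subr0 sub0r abszN.
Qed.

Fixpoint int_box (k N : nat) : seq (seq int) :=
  if k is k'.+1 then [seq a :: x | a <- [seq Posz i | i <- iota 0 N], x <- int_box k' N]
  else [:: [::]].

Lemma size_int_box k N : size (int_box k N) = N ^ k.
Proof. by elim: k => [|k IHk] //=; rewrite size_allpairs size_map size_iota IHk expnS. Qed.

Lemma mem_int_box k N x : size x = k ->
  (forall i, i < k -> (0 <= nth 0%R x i < Posz N)%R) -> x \in int_box k N.
Proof.
elim: k x => [|k IHk] [|a x] //= [sx] hx; apply/allpairsPdep; exists a, x.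
split=> //; last by apply: IHk => // i; apply: (hx i.+1).
have /andP[] := hx 0 isT; case: a {hx} => // j _ ltjN.
by apply/mapP; exists j; rewrite ?mem_iota.
Qed.

Lemma pigeonhole_pairs (S D : seq (seq int)) (N k : nat) (g : seq int -> seq int -> seq int) :
  uniq S -> uniq D ->
  {in S & D, forall q u, g q u \in int_box k N} ->
  (forall q, q \in S -> {in D &, injective (g q)}) ->
  N ^ k < size S * size D ->
  exists q q' u u', [/\ q \in S, q' \in S, u \in D & u' \in D] /\ q != q' /\ g q u = g q' u'.
Proof.
move=> uS uD g_box g_inj ltND; apply: NNPP => no_collision.
pose P := [seq (q, u) | q <- S, u <- D].
have uP : uniq P by apply: allpairs_uniq => // [[a b] [c d]] _ _ /= [-> ->].
have injP : {in P &, injective (fun p => g p.1 p.2)}.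
  move=> _ _ /allpairsP[[q u] [hq hu ->]] /allpairsP[[q' u'] [hq' hu' ->]] /= e.
  have [eq_q|ne_q] := eqVneq q q'; last by case: no_collision; exists q, q', u, u'.
  by subst q'; rewrite (g_inj q hq u u' hu hu' e).
have: size S * size D <= N ^ k.
  rewrite -size_int_box -(size_allpairs pair) -(size_map (fun p => g p.1 p.2)).
  apply: uniq_leq_size; first by rewrite map_inj_in_uniq.
  move=> _ /mapP[_ /allpairsP[[q u] [hq hu ->]] ->]; exact: g_box.
by rewrite leqNgt ltND.
Qed.

Lemma leq_self_expn x k : 0 < k -> x <= x ^ k.
Proof. by case: x => // x k_gt0; rewrite -{1}(expn1 x.+1) leq_pexp2l. Qed.

Lemma expn_le_bin_fact k R : (2 * (R + 1 - k)) ^ k <= 2 ^ k * 'C(R, k) * k`!.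
Proof.
rewrite expnMn -mulnA leq_mul2l bin_ffact ffact_prod; apply/orP; right.
rewrite -[k in _ ^ k]card_ord -prod_nat_const.
by apply: leq_prod => i _; have := ltn_ord i; lia.
Qed.

Lemma exists_crossing (P : pred nat) a b :
  P a -> ~~ P (a + b) -> exists k, [/\ a <= k, P k & ~~ P k.+1].
Proof.
move=> Pa nPab; have exQ : exists j, ~~ P (a + j) by exists b.
case: (ex_minnP exQ) => -[|j]; first by rewrite addn0 Pa.
move=> nPj min_j; exists (a + j); rewrite leq_addr -addnS; split=> //.
by apply: contraT => /min_j; rewrite ltnn.
Qed.

Local Open Scope ring_scope.

Lemma prod_mul_expn_le (F : realDomainType) k (E : 'I_k -> F) :
  (forall i, 0 <= E i) -> (\prod_(i < k) E i) * k%:R ^+ k <= (\sum_(i < k) E i) ^+ k.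
Proof.
move=> E_ge0; have [+ _] := leif_AGM_scaled (A := predT) (fun i _ => mulrn_wge0 #|predT| (E_ge0 i)).
by rewrite prodrMn_const cardT size_enum_ord -mulr_natr natrX.
Qed.

Lemma prod_mul_expn_lt (F : realDomainType) k (E : 'I_k -> F) b : (0 < k)%N ->
  (forall i, 0 <= E i) -> \sum_(i < k) E i < b -> (\prod_(i < k) E i) * k%:R ^+ k < b ^+ k.
Proof.
move=> k_gt0 E_ge0 lt_sum; apply: le_lt_trans (prod_mul_expn_le E_ge0) _.
by rewrite ltrXn2r -?lt0n ?nnegrE ?sumr_ge0 // (le_trans _ (ltW lt_sum)) ?sumr_ge0.
Qed.

Lemma exprD1_le (F : realFieldType) (t : F) k :
  0 <= t <= 1 -> (1 + t) ^+ k <= 1 + ((2 ^ k)%:R - 1) * t.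
Proof.
move=> /andP[t_ge0 t_le1]; elim: k => [|k IHk]; first by rewrite expr0 subrr mul0r addr0.
have t2_le_t : t * t <= t by rewrite -[leRHS]mulr1 ler_wpM2l.
have two_k_ge1 : 1 <= (2 ^ k)%:R :> F by rewrite ler1n expn_gt0.
rewrite exprS expnS natrM; apply: le_trans (ler_wpM2l _ IHk) _; first lra.
set a := (2 ^ k)%:R in two_k_ge1 *; nra.
Qed.

Lemma eventually_expn_addn_le (F : archiRealFieldType) (k a : nat) (e : F) : 0 < e ->
  exists N, forall x, (N <= x)%N -> (x + a)%:R ^+ k <= x%:R ^+ k * (1 + e).
Proof.
move=> e_gt0; pose e' := Num.min e 1.
have e'_gt0 : 0 < e' by rewrite lt_min e_gt0 ltr01.
have e'_le1 : e' <= 1 by rewrite ge_min lexx orbT.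
have e'_le : e' <= e by rewrite ge_min lexx.
have two_k_gt0 : 0 < (2 ^ k)%:R :> F by rewrite ltr0n expn_gt0.
exists (Num.bound ((2 ^ k * a)%:R / e')).+1 => x ltNx.
have x_gt0 : 0 < x%:R :> F by rewrite ltr0n (leq_trans _ ltNx).
have : (2 ^ k * a)%:R / e' < x%:R.
  apply: lt_le_trans (archi_boundP _) _; first by rewrite divr_ge0 ?ler0n ?(ltW e'_gt0).
  by rewrite ler_nat ltnW.
rewrite ltr_pdivrMr // natrM -ltr_pdivrMl // mulrC => lt_ta.
pose t : F := a%:R / x%:R.
have t_ge0 : 0 <= t by rewrite divr_ge0 ?ler0n ?ltW.
have t_lt : t * (2 ^ k)%:R < e' by rewrite /t mulrC mulrA.
have -> : (x + a)%:R = x%:R * (1 + t) by rewrite natrD mulrDr mulr1 mulrC divfK ?gt_eqF.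
rewrite exprMn ler_wpM2l ?exprn_ge0 ?ler0n //.
have t_le1 : t <= 1.
  by apply: le_trans (ltW (lt_le_trans t_lt e'_le1)); rewrite ler_peMr // ler1n expn_gt0.
apply: le_trans (@exprD1_le F t k _) _; first by rewrite t_ge0 t_le1.
rewrite lerD2l; nra.
Qed.

Lemma exists_margin (F : realFieldType) (K c : F) : 0 < K -> K < c ->
  exists e, 0 < e /\ K * (1 + e) ^+ 3 <= c.
Proof.
move=> K_gt0 lt_Kc; pose e := Num.min 1 ((c - K) / (7 * K)).
have e_gt0 : 0 < e by rewrite lt_min ltr01 divr_gt0 ?subr_gt0 ?mulr_gt0.
have e_le1 : e <= 1 by rewrite ge_min lexx.
have e_le : 7 * K * e <= c - K.
  by rewrite mulrC -ler_pdivlMr ?mulr_gt0 // ge_min lexx orbT.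
exists e; split=> //.
have -> : K * (1 + e) ^+ 3 = K + K * e * (3 + 3 * e + e * e) by ring.
have : e * e <= e by rewrite -[leRHS]mulr1 ler_wpM2l // ltW.
nra.
Qed.

Definition fract (F : archiRealFieldType) (x : F) : F := x - (Num.floor x)%:~R.

Lemma fract_ge0 (F : archiRealFieldType) (x : F) : 0 <= fract x.
Proof. by rewrite subr_ge0 floor_le. Qed.

Lemma fract_lt1 (F : archiRealFieldType) (x : F) : fract x < 1.
Proof. by rewrite ltrBlDr addrC -[1]/(1%:~R) -intrD floorD1_gt. Qed.

Lemma norm_subr_lt_floor (F : archiRealFieldType) (x y : F) :
  `|x - y| < `|(Num.floor x - Num.floor y)%:~R| + 1.
Proof.
have := floor_le x; have := floorD1_gt x; have := floor_le y; have := floorD1_gt y.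
rewrite intrB !intrD; set a := (Num.floor x)%:~R; set b := (Num.floor y)%:~R.
have := ler_norm (a - b); have := ler_norm (b - a); rewrite distrC.
rewrite ltr_norml; lra.
Qed.

Lemma Pi_plus_le (R : realType) n (q : 'I_n -> int) :
  @Pi_plus R n q * n%:R ^+ n <= (n + \sum_(j < n) `|q j|)%:R ^+ n.
Proof.
have max_ge0 j : 0 <= Num.max 1 (`|q j|%:~R : R) by rewrite le_max ler01.
apply: le_trans (prod_mul_expn_le max_ge0) _.
rewrite lerXn2r ?nnegrE ?ler0n ?sumr_ge0 // natrD natr_sum.
have -> : n%:R = \sum_(j < n) (1 : R) by rewrite sumr_const card_ord.
rewrite -big_split ler_sum // => j _.
by rewrite ge_max natr_absz intr_norm lerDl lerDr ler01 normr_ge0.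
Qed.

Section DirichletBox.
Variables (R : realType) (m n : nat) (Y : 'M[R]_(m, n)).

Definition lin_form (q : seq int) (i : 'I_m) : R := \sum_(j < n) Y i j * (nth 0 q j)%:~R.

Let digit (M : nat) (q : seq int) (i : 'I_m) : int := Num.floor (M%:R * fract (lin_form q i)).

Lemma digit_collision (Rq r M : nat) : (0 < M)%N ->
  ((M + 2 * r) ^ m < 2 ^ n * 'C(Rq, n) * (2 ^ m * 'C(r, m)))%N ->
  exists q q' u u',
    [/\ q \in l1_ball n Rq, q' \in l1_ball n Rq, u \in l1_ball m r & u' \in l1_ball m r] /\
    q != q' /\ forall i, digit M q i - digit M q' i = nth 0 u' i - nth 0 u i.
Proof.
move=> M_gt0 lt_box.
have digit_bnd q i : 0 <= digit M q i < Posz M.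
  rewrite floor_ge0 floor_lt_int mulr_ge0 ?ler0n ?fract_ge0 //=.
  by rewrite -[ltRHS]mulr1 ltr_pM2l ?fract_lt1 ?ltr0n.
have u_bnd u (i : 'I_m) : u \in l1_ball m r -> - Posz r <= nth 0 u i <= Posz r.
  by case/mem_l1_ball => _ ur; have := leq_trans (l1_norm_nth u (ltn_ord i)) ur; lia.
pose g q u := [seq digit M q i + nth 0 u i + Posz r | i <- enum 'I_m].
have nth_g q u (i : 'I_m) : nth 0 (g q u) i = digit M q i + nth 0 u i + Posz r.
  by rewrite (nth_map i) ?size_enum_ord // nth_ord_enum.
have g_box : {in l1_ball n Rq & l1_ball m r, forall q u, g q u \in int_box m (M + 2 * r)}.
  move=> q u _ uD; apply: mem_int_box => [|k km]; first by rewrite size_map size_enum_ord.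
  have := nth_g q u (Ordinal km); have := digit_bnd q (Ordinal km).
  have := u_bnd u (Ordinal km) uD; move=> /= ? ? ->; lia.
have g_inj q : q \in l1_ball n Rq -> {in l1_ball m r &, injective (g q)}.
  move=> _ u u' /mem_l1_ball[su _] /mem_l1_ball[su' _] eq_g.
  apply: (@eq_from_nth _ 0) => [|k]; rewrite su // => km.
  by have := congr1 (nth 0 ^~ (Ordinal km)) eq_g; rewrite !nth_g => /addIr/addrI.
have lt_pairs : ((M + 2 * r) ^ m < size (l1_ball n Rq) * size (l1_ball m r))%N.
  exact: leq_trans lt_box (leq_mul (l1_ball_size n Rq) (l1_ball_size m r)).
have [q [q' [u [u' [mem_qu [neq_qq' eq_g]]]]]] :=
  pigeonhole_pairs (l1_ball_uniq n Rq) (l1_ball_uniq m r) g_box g_inj lt_pairs.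
exists q, q', u, u'; split=> //; split=> // i.
by have := congr1 (nth 0 ^~ i) eq_g; rewrite !nth_g; lia.
Qed.

Lemma row_form_sub_fract (q q' : seq int) i :
  row_form Y (fun j => nth 0 q j - nth 0 q' j)
    (fun i => Num.floor (lin_form q i) - Num.floor (lin_form q' i)) i =
  fract (lin_form q i) - fract (lin_form q' i).
Proof.
rewrite /row_form /fract /lin_form intrB.
under eq_bigr do rewrite intrB mulrBr.
rewrite sumrB; ring.
Qed.

Lemma dirichlet_box (Rq r M : nat) : (0 < m)%N -> (0 < M)%N ->
  ((M + 2 * r) ^ m < 2 ^ n * 'C(Rq, n) * (2 ^ m * 'C(r, m)))%N ->
  exists (p : 'I_m -> int) (q : 'I_n -> int), (exists j, q j != 0) /\
    (\prod_(i < m) `|row_form Y q p i|) * (m%:R * M%:R) ^+ m < (2 * r + m)%N%:R ^+ m /\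
    @Pi_plus R n q * n%:R ^+ n <= (n + 2 * Rq)%N%:R ^+ n.
Proof.
move=> m_gt0 M_gt0 lt_box.
have [q [q' [u [u' [[qB q'B uB u'B] [neq_qq' eq_digit]]]]]] := digit_collision M_gt0 lt_box.
case/mem_l1_ball: qB q'B uB u'B => sq nq /mem_l1_ball[sq' nq'].
move=> /mem_l1_ball[_ nu] /mem_l1_ball[_ nu'].
pose qv (j : 'I_n) := nth 0 q j - nth 0 q' j.
exists (fun i => Num.floor (lin_form q i) - Num.floor (lin_form q' i)), qv.
split; [|split].
- have /existsP[j] : [exists j, qv j != 0]; last by exists j.
  apply: contraR neq_qq' => /existsPn qv0.
  apply/eqP/(@eq_from_nth _ 0) => [|k]; rewrite sq ?sq' // => kn.
  by have := qv0 (Ordinal kn); rewrite negbK subr_eq0 => /eqP.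
- under eq_bigr do rewrite row_form_sub_fract.
  set L := fun i => `|fract (lin_form q i) - fract (lin_form q' i)|.
  have -> : \prod_(i < m) L i * (m%:R * M%:R) ^+ m =
            (\prod_(i < m) (M%:R * L i)) * m%:R ^+ m.
    by rewrite prodrMl card_ord exprMn; ring.
  apply: prod_mul_expn_lt => // [i|]; first by rewrite mulr_ge0 ?ler0n ?normr_ge0.
  have lt_digit i : M%:R * L i < `|(nth 0 u' i - nth 0 u i)%:~R| + 1.
    rewrite /L -[M%:R]ger0_norm ?ler0n // -normrM mulrBr -eq_digit.
    exact: norm_subr_lt_floor.
  apply: lt_le_trans (ltr_sum _ (fun i _ => lt_digit i)) _.
    by apply/hasP; exists (Ordinal m_gt0); rewrite ?mem_index_enum.
  rewrite big_split sumr_const card_ord /= natrD lerD2r.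
  under eq_bigr do rewrite -intr_norm -natr_absz.
  by rewrite -natr_sum ler_nat (leq_trans (sum_absz_sub_le m u' u)) //; lia.
- apply: le_trans (@Pi_plus_le R n qv) _; rewrite lerXn2r ?nnegrE ?ler0n // ler_nat leq_add2l.
  by apply: leq_trans (sum_absz_sub_le n q q') _; lia.
Qed.

End DirichletBox.

Section ParameterChoice.
Variables (F : archiRealFieldType) (m n : nat) (c e : F) (r M1 R0 : nat).
Let K : F := (m`! * n`!)%:R / ((m ^ m)%:R * (n ^ n)%:R).
Let A (Rq : nat) := (2 ^ n * 'C(Rq, n) * (2 ^ m * 'C(r, m)))%N.
Hypotheses (m_gt0 : (0 < m)%N) (n_gt0 : (0 < n)%N) (e_ge0 : 0 <= e).
Hypothesis margin : K * (1 + e) ^+ 3 <= c.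
Hypothesis r_ge_m : (m <= r)%N.
Hypothesis r_large : (2 * r + m)%N%:R ^+ m <= (2 * (r + 1 - m))%N%:R ^+ m * (1 + e).
Hypothesis M1_gt0 : (0 < M1)%N.
Hypothesis M1_large : forall M, (M1 <= M)%N -> (M + 1 + 2 * r)%N%:R ^+ m <= M%:R ^+ m * (1 + e).
Hypothesis R0_large : forall Rq, (R0 <= Rq)%N ->
  (n + 2 * Rq.+1)%N%:R ^+ n <= (2 * (Rq + 1 - n))%N%:R ^+ n * (1 + e).
Hypothesis R0_box : (n`! * (M1 + 2 * r) ^ m < 2 * (R0 + 1 - n))%N.

Lemma box_nonempty Rq : (R0 <= Rq)%N -> ((M1 + 2 * r) ^ m < A Rq)%N.
Proof.
move=> le_R0; rewrite -(ltn_pmul2l (fact_gt0 n)); apply: (leq_trans R0_box).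
have le_x : (2 * (R0 + 1 - n) <= 2 * (Rq + 1 - n))%N by lia.
apply: (leq_trans le_x); apply: (leq_trans (leq_self_expn _ n_gt0)).
apply: (leq_trans (expn_le_bin_fact n Rq)).
by rewrite mulnC leq_mul2l /A leq_pmulr ?orbT // muln_gt0 expn_gt0 bin_gt0 r_ge_m.
Qed.

Lemma box_estimate Rq M T : (R0 <= Rq)%N -> (M1 <= M)%N -> 0 <= T ->
  T * n%:R ^+ n <= (n + 2 * Rq.+1)%N%:R ^+ n -> (A Rq <= (M + 1 + 2 * r) ^ m)%N ->
  T * (2 * r + m)%N%:R ^+ m <= c * (m%:R * M%:R) ^+ m.
Proof.
move=> le_R0 le_M1 T_ge0 le_T le_A.
set xR := (2 * (Rq + 1 - n))%N; set xr := (2 * (r + 1 - m))%N.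
have nn_gt0 : 0 < n%:R ^+ n :> F by rewrite exprn_gt0 ?ltr0n.
have e1_ge0 : 0 <= 1 + e by rewrite addr_ge0.
have le_TR : T * n%:R ^+ n <= xR%:R ^+ n * (1 + e) := le_trans le_T (R0_large le_R0).
have le_x : (xR ^ n * xr ^ m)%N%:R <= (A Rq)%:R * (n`! * m`!)%N%:R :> F.
  by rewrite -natrM ler_nat mulnACA; apply: leq_mul; apply: expn_le_bin_fact.
have le_AM : (A Rq)%:R <= M%:R ^+ m * (1 + e) :> F.
  by apply: le_trans (M1_large le_M1); rewrite -natrX ler_nat.
have est : T * n%:R ^+ n * (2 * r + m)%N%:R ^+ m <=
           (m`! * n`!)%:R * M%:R ^+ m * (1 + e) ^+ 3.
  apply: le_trans (ler_pM _ _ le_TR r_large) _; rewrite ?mulr_ge0 ?exprn_ge0 ?ler0n //.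
  have -> : xR%:R ^+ n * (1 + e) * (xr%:R ^+ m * (1 + e)) =
            (xR ^ n * xr ^ m)%N%:R * (1 + e) ^+ 2.
    by rewrite natrM !natrX; ring.
  apply: le_trans (ler_wpM2r (exprn_ge0 2 e1_ge0) le_x) _.
  apply: le_trans (ler_wpM2r (exprn_ge0 2 e1_ge0) (ler_wpM2r (ler0n _ _) le_AM)) _.
  by rewrite !natrM le_eqVlt; apply/orP; left; apply/eqP; ring.
rewrite -(ler_pM2r nn_gt0) mulrAC; apply: le_trans est _.
have -> : (m`! * n`!)%:R * M%:R ^+ m * (1 + e) ^+ 3 =
          K * (1 + e) ^+ 3 * ((m%:R * M%:R) ^+ m * n%:R ^+ n).
  by rewrite /K exprMn !natrX; field; rewrite ?gt_eqF // exprn_gt0 ?ltr0n.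
rewrite mulrA; apply: ler_wpM2r; first exact: ltW.
by apply: ler_wpM2r; rewrite ?exprn_ge0 ?mulr_ge0 ?ler0n.
Qed.

Lemma parameters_at T : ((n + 2 * R0) ^ n)%:R < T ->
  exists Rq M : nat, [/\ (0 < M)%N, ((M + 2 * r) ^ m < A Rq)%N,
    (n + 2 * Rq)%N%:R ^+ n < T * n%:R ^+ n
  & T * (2 * r + m)%N%:R ^+ m <= c * (m%:R * M%:R) ^+ m].
Proof.
move=> lt_T; have T_ge0 : 0 <= T by apply: le_trans (ltW lt_T).
pose P k := (n + 2 * k)%N%:R ^+ n < T * n%:R ^+ n.
have [Rq [le_R0 PRq nPRq]] : exists Rq, [/\ (R0 <= Rq)%N, P Rq & ~~ P Rq.+1].
  apply: (@exists_crossing P R0 (Num.bound (T * n%:R ^+ n))).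
    by rewrite /P -natrX (lt_le_trans lt_T) // ler_peMr // exprn_ege1 ?ler1n.
  rewrite /P -leNgt -[leRHS]natrX; apply: le_trans (ltW (archi_boundP _)) _.
    by rewrite mulr_ge0 ?exprn_ge0.
  by rewrite ler_nat (leq_trans _ (leq_self_expn _ n_gt0)) //; lia.
pose Q k := ((k + 2 * r) ^ m < A Rq)%N.
have [M [le_M1 QM nQM]] : exists M, [/\ (M1 <= M)%N, Q M & ~~ Q M.+1].
  apply: (@exists_crossing Q M1 (A Rq) (box_nonempty le_R0)).
  by rewrite /Q -leqNgt (leq_trans _ (leq_self_expn _ m_gt0)) //; lia.
exists Rq, M; split=> //; first exact: leq_trans M1_gt0 le_M1.
apply: box_estimate le_R0 le_M1 T_ge0 _ _; first by move: nPRq; rewrite /P leNgt.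
by move: nQM; rewrite /Q -leqNgt addn1.
Qed.

End ParameterChoice.

Lemma pigeonhole_parameters (F : archiRealFieldType) (m n : nat) (c : F) :
  (0 < m)%N -> (0 < n)%N -> (m`! * n`!)%:R / ((m ^ m)%:R * (n ^ n)%:R) < c ->
  exists T0, 1 < T0 /\ forall T, T0 <= T -> exists Rq r M : nat,
    [/\ (0 < M)%N, ((M + 2 * r) ^ m < 2 ^ n * 'C(Rq, n) * (2 ^ m * 'C(r, m)))%N,
        (n + 2 * Rq)%N%:R ^+ n < T * n%:R ^+ n
      & T * (2 * r + m)%N%:R ^+ m <= c * (m%:R * M%:R) ^+ m].
Proof.
move=> m_gt0 n_gt0 lt_Kc.
have [e [e_gt0 margin]] :
    exists e, 0 < e /\ (m`! * n`!)%:R / ((m ^ m)%:R * (n ^ n)%:R) * (1 + e) ^+ 3 <= c.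
  apply: exists_margin lt_Kc.
  by rewrite divr_gt0 ?mulr_gt0 ?ltr0n ?muln_gt0 ?fact_gt0 ?expn_gt0 ?m_gt0 ?n_gt0.
have [Nr Nr_large] := eventually_expn_addn_le m (3 * m) e_gt0.
have [NM NM_large] := eventually_expn_addn_le m (2 * (m + Nr) + 1) e_gt0.
have [NR NR_large] := eventually_expn_addn_le n (3 * n) e_gt0.
pose r := (m + Nr)%N; pose M1 := NM.+1.
pose R0 := (n + maxn NR (n`! * (M1 + 2 * r) ^ m))%N.
have r_large : (2 * r + m)%N%:R ^+ m <= (2 * (r + 1 - m))%N%:R ^+ m * (1 + e).
  apply: le_trans (Nr_large _ _); last by rewrite /r; lia.
  by rewrite lerXn2r ?nnegrE ?ler0n // ler_nat /r; lia.
have M1_large M : (M1 <= M)%N -> (M + 1 + 2 * r)%N%:R ^+ m <= M%:R ^+ m * (1 + e).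
  by move=> le_M; rewrite -addnA [(1 + _)%N]addnC NM_large // ltnW.
have R0_large Rq : (R0 <= Rq)%N ->
    (n + 2 * Rq.+1)%N%:R ^+ n <= (2 * (Rq + 1 - n))%N%:R ^+ n * (1 + e).
  rewrite /R0 => le_R0; have -> : (n + 2 * Rq.+1 = 2 * (Rq + 1 - n) + 3 * n)%N by lia.
  by apply: NR_large; lia.
have R0_box : (n`! * (M1 + 2 * r) ^ m < 2 * (R0 + 1 - n))%N by rewrite /R0; lia.
exists (((n + 2 * R0) ^ n)%:R + 1); split=> [|T le_T].
  suff : 0 < ((n + 2 * R0) ^ n)%:R :> F by lra.
  by rewrite ltr0n expn_gt0 addn_gt0 n_gt0.
have lt_T : ((n + 2 * R0) ^ n)%:R < T by apply: lt_le_trans le_T; lra.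
have [Rq [M [M_gt0 lt_box lt_Rq le_c]]] := parameters_at m_gt0 n_gt0 (ltW e_gt0) margin
  (leq_addr Nr m) r_large (ltn0Sn NM) M1_large R0_large R0_box lt_T.
by exists Rq, r, M.
Qed.

Theorem mainTheorem3 (R : realType) (m n : nat) (hm : (1 <= m)%N) (hn : (1 <= n)%N)
  (c : R) :
  ((m`! * n`!)%:R / ((m ^ m)%:R * (n ^ n)%:R) < c) ->
  forall Y : 'M[R]_(m, n), @D_times R m n (fun x : R => c * @psi1 R x) Y.
Proof.
move=> lt_Kc Y; have [T0 [T0_gt1 params]] := pigeonhole_parameters hm hn lt_Kc.
exists T0; split=> // T le_T.
have [Rq [r [M [M_gt0 lt_box lt_Rq le_c]]]] := params T le_T.
have T_gt0 : 0 < T := lt_le_trans (lt_trans ltr01 T0_gt1) le_T.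
have [p [q [q_neq0 [lt_prod le_Pi]]]] := dirichlet_box Y hm M_gt0 lt_box.
exists p, q; split=> //; split.
- have mM_gt0 : 0 < (m%:R * M%:R) ^+ m :> R by rewrite exprn_gt0 ?mulr_gt0 ?ltr0n.
  rewrite /psi1 -(ltr_pM2r mM_gt0) -(ltr_pM2l T_gt0).
  have -> : T * (c / T * (m%:R * M%:R) ^+ m) = c * (m%:R * M%:R) ^+ m by field; rewrite gt_eqF.
  by apply: lt_le_trans le_c; rewrite ltr_pM2l.
- have nn_gt0 : 0 < n%:R ^+ n :> R by rewrite exprn_gt0 ?ltr0n.
  by rewrite -(ltr_pM2r nn_gt0) (le_lt_trans le_Pi).
Qed.
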